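(* For any integer $n\ge3$, with $P_n$ and $C_n$ the path and cycle of order $n$, $$\gamma_{(2,2,1)}(C_n)=\gamma_{(2,2,1)}(P_n)=\begin{cases} n-\lfloor n/7\rfloor+1 & \text{if } n\equiv1,2\pmod 7,\\ n-\lfloor n/7\rfloor & \text{otherwise.}\end{cases}$$
   Context: $N(v)$ is the open neighbourhood. $\gamma_{(2,2,1)}(G)$ is the minimum of $\sum_v f(v)$ over functions $f:V(G)\to\{0,1,2\}$ such that $\sum_{u\in N(v)}f(u)\ge 2$ whenever $f(v)\in\{0,1\}$ and $\sum_{u\in N(v)}f(u)\ge1$ whenever $f(v)=2$. *)

From mathcomp Require Import all_boot.
Set Implicit Arguments. Unset Strict Implicit. Unset Printing Implicit Defensive.

(* A simple graph on a finite vertex type T is given by a symmetric,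
   irreflexive adjacency relation e : rel T; the open neighbourhood of v
   is [pred u | e v u]. *)

Definition nbsum (T : finType) (e : rel T) (f : {ffun T -> 'I_3}) (v : T) : nat :=
  \sum_(u | e v u) (f u : nat).

Definition is_221_fun (T : finType) (e : rel T) (f : {ffun T -> 'I_3}) : bool :=
  [forall v, ((f v <= 1) ==> (2 <= nbsum e f v)) && ((f v == 2 :> nat) ==> (1 <= nbsum e f v))].

Definition weight (T : finType) (f : {ffun T -> 'I_3}) : nat := \sum_v (f v : nat).

(* gamma_(2,2,1)(G): minimum weight of a (2,2,1)-function.
   (The default value 2*|V| is an upper bound on every weight, so it does not
   affect the minimum whenever some (2,2,1)-function exists.) *)
Definition gamma221 (T : finType) (e : rel T) : nat :=
  \big[minn/(#|T|.*2)]_(f : {ffun T -> 'I_3} | is_221_fun e f) weight f.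

Definition path_rel (n : nat) : rel 'I_n :=
  fun i j => (i.+1 == j :> nat) || (j.+1 == i :> nat).

(* Cycle C_n on vertices 0..n-1 (a simple cycle for n >= 3). *)
Definition cycle_rel (n : nat) : rel 'I_n :=
  fun i j => (j == i.+1 %% n :> nat) || (i == j.+1 %% n :> nat).

Arguments path_rel n i j : clear implicits.
Arguments cycle_rel n i j : clear implicits.

From mathcomp Require Import all_boot zmodp zify.
Set Implicit Arguments. Unset Strict Implicit. Unset Printing Implicit Defensive.

(* Read around C_n, a (2,2,1)-function is a cyclic word over {0,1,2} in which
   every letter satisfies the local condition with respect to its two
   neighbours.  A transfer-matrix computation whose states are the first two
   and the last two letters gives a lower bound for the weight of such words
   of every length; the table is periodic (seven more letters cost exactly six
   more from length 9 on), so finitely many checks prove the lower bound for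
   all n.  Conversely, the pattern 0210120 repeated and followed by one of
   seven short words is a (2,2,1)-function on P_n of the right weight, and P_n
   is a spanning subgraph of C_n, which sandwiches both parameters. *)

Definition gamma221_formula (n : nat) : nat :=
  n - n %/ 7 + (if (n %% 7 == 1) || (n %% 7 == 2) then 1 else 0).

Lemma gamma221_formula_add7n m q :
  gamma221_formula (m + 7 * q) = gamma221_formula m + 6 * q.
Proof.
rewrite /gamma221_formula (addnC m) (mulnC 7) modnMDl divnMDl //.
have := leq_div m 7; lia.
Qed.

Definition dom221 (x s : nat) : bool := if x <= 1 then 2 <= s else 1 <= s.

Lemma dom221_le x s s' : s <= s' -> dom221 x s -> dom221 x s'.
Proof. by rewrite /dom221 => le_ss'; case: ifP => _ /leq_trans; apply. Qed.

Lemma is_221_funE (T : finType) (e : rel T) f :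
  is_221_fun e f = [forall v, dom221 (f v) (nbsum e f v)].
Proof.
by apply: eq_forallb => v; rewrite /dom221; case: (f v) => [[|[|[|]]] ?] //=; rewrite andbT.
Qed.

Lemma is_221_fun_subrel (T : finType) (e e' : rel T) f :
  subrel e e' -> is_221_fun e f -> is_221_fun e' f.
Proof.
move=> ee'; rewrite !is_221_funE => /forallP f221; apply/forallP => v.
apply: dom221_le (f221 v); apply: sub_le_big => // [x y|u]; [exact: leq_addr | exact: ee'].
Qed.

Lemma bigmin_le (I : eqType) (r : seq I) (P : pred I) (F : I -> nat) d x :
  x \in r -> P x -> \big[minn/d]_(y <- r | P y) F y <= F x.
Proof.
move=> + Px; elim: r => // y r IH; rewrite inE big_cons => /predU1P [<-|xr].
  by rewrite Px geq_minl.
by case: ifP => _; [exact: leq_trans (geq_minr _ _) (IH xr) | exact: IH].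
Qed.

Lemma bigmin_ge (T : finType) (P : pred T) (F : T -> nat) d m :
  m <= d -> (forall y, P y -> m <= F y) -> m <= \big[minn/d]_(y | P y) F y.
Proof. by move=> m_le_d m_le_F; elim/big_ind: _ => // a b ma mb; rewrite leq_min ma mb. Qed.

Lemma weight_le (T : finType) (f : {ffun T -> 'I_3}) : weight f <= #|T|.*2.
Proof.
rewrite -mul2n -sum1_card big_distrr /= muln1; apply: leq_sum => v _.
by rewrite -ltnS.
Qed.

Lemma gamma221_witness (T : finType) (e : rel T) f :
  is_221_fun e f -> (forall g, is_221_fun e g -> weight f <= weight g) ->
  gamma221 e = weight f.
Proof.
move=> f221 f_min; apply/eqP; rewrite eqn_leq bigmin_le ?mem_index_enum //.
exact: bigmin_ge (weight_le f) f_min.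
Qed.

Definition wsum (s : seq 'I_3) : nat := sumn (map (@nat_of_ord 3) s).

Lemma wsum_cat s t : wsum (s ++ t) = wsum s + wsum t.
Proof. by rewrite /wsum map_cat sumn_cat. Qed.

Lemma weight_fgraph (T : finType) (f : {ffun T -> 'I_3}) : weight f = wsum (fgraph f).
Proof. by rewrite /wsum -codom_ffun sumnE big_map big_image. Qed.

Lemma size_fgraph_ord T n (f : {ffun 'I_n -> T}) : size (fgraph f) = n.
Proof. by rewrite size_tuple card_ord. Qed.

Fixpoint inner221 (s : seq 'I_3) : bool :=
  if s is x :: ((y :: z :: _) as t) then dom221 y (x + z) && inner221 t else true.

Lemma inner221P (s : seq 'I_3) :
  reflect (forall i, i.+2 < size s ->
             dom221 (nth ord0 s i.+1) (nth ord0 s i + nth ord0 s i.+2))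
          (inner221 s).
Proof.
elim: s => [|x s IH]; first by left.
case: s IH => [|y [|z t]] IH; try by left; case.
apply: (iffP andP) => [[xyz /IH t221] [|i] //= ?|s221]; first exact: t221.
split; first exact: (s221 0).
by apply/IH => i ?; apply: (s221 i.+1).
Qed.

Lemma inner221_cons3 x y z t :
  inner221 [:: x, y, z & t] = dom221 y (x + z) && inner221 [:: y, z & t].
Proof. by []. Qed.

Lemma inner221_glue u x y v :
  inner221 (u ++ [:: x; y]) -> inner221 [:: x, y & v] -> inner221 (u ++ [:: x, y & v]).
Proof.
elim: u => [|a [|b [|c u]] IH] //; rewrite !cat_cons ?cat0s !inner221_cons3.
- by case/andP => -> _ ->.
- by case/and3P => -> -> _ ->.
- by case/andP => -> ? ?; apply: IH.
Qed.

(* Tables over the states (x0, x1, a, b) in {0,1,2}^4 are lists of length 81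
   indexed by [code], rather than finfuns, so that [vm_compute] evaluates them. *)
Definition code (x0 x1 a b : nat) : nat := x0 * 27 + x1 * 9 + a * 3 + b.

Definition tabulate T (F : nat -> nat -> nat -> nat -> T) : seq T :=
  mkseq (fun i => F (i %/ 27) (i %/ 9 %% 3) (i %/ 3 %% 3) (i %% 3)) 81.

Lemma size_tabulate T (F : nat -> nat -> nat -> nat -> T) : size (tabulate F) = 81.
Proof. exact: size_mkseq. Qed.

Lemma code_lt (x0 x1 a b : 'I_3) : code x0 x1 a b < 81.
Proof.
rewrite /code; have := ltn_ord x0; have := ltn_ord x1; have := ltn_ord a.
by have := ltn_ord b; lia.
Qed.

Lemma nth_tabulate T (d : T) F (x0 x1 a b : 'I_3) :
  nth d (tabulate F) (code x0 x1 a b) = F x0 x1 a b.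
Proof.
rewrite nth_mkseq ?code_lt //.
by case: x0 => [[|[|[|]]] ?]; case: x1 => [[|[|[|]]] ?];
   case: a => [[|[|[|]]] ?]; case: b => [[|[|[|]]] ?].
Qed.

Lemma mem_tabulate (T : eqType) (F : nat -> nat -> nat -> nat -> T) (x0 x1 a b : 'I_3) :
  F x0 x1 a b \in tabulate F.
Proof.
by rewrite -(nth_tabulate (F x0 x1 a b)) mem_nth // size_tabulate code_lt.
Qed.

Lemma eq_tabulate T (F G : nat -> nat -> nat -> nat -> T) :
  (forall x0 x1 a b : 'I_3, F x0 x1 a b = G x0 x1 a b) -> tabulate F = tabulate G.
Proof.
move=> eqFG; apply/eq_in_map => i; rewrite mem_iota => /= i_lt81.
have lt3 m : m %% 3 < 3 by rewrite ltn_mod.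
have i27 : i %/ 27 < 3 by rewrite ltn_divLR.
exact: (eqFG (Ordinal i27) (Ordinal (lt3 _)) (Ordinal (lt3 _)) (Ordinal (lt3 _))).
Qed.

Lemma map_tabulate T T' (g : T -> T') F :
  map g (tabulate F) = tabulate (fun x0 x1 a b => g (F x0 x1 a b)).
Proof. by rewrite -map_comp. Qed.

Definition entry (t : seq nat) (x0 x1 a b : nat) : nat := nth 0 t (code x0 x1 a b).

Lemma entry_map_addn c t x0 x1 a b : code x0 x1 a b < size t ->
  entry (map (addn c) t) x0 x1 a b = c + entry t x0 x1 a b.
Proof. by move=> lt_code; rewrite /entry (nth_map 0). Qed.

(* [entry (dp k) x0 x1 a b] is the least weight of a word of length k + 2
   starting with x0 x1, ending with a b and satisfying [dom221] at every inner
   letter; 100 marks states that no such word reaches. *)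
Definition dp0 : seq nat :=
  tabulate (fun x0 x1 a b => if (x0 == a) && (x1 == b) then x0 + x1 else 100).

(* An inadmissible successor x2 is replaced by 2, which is always admissible,
   so the minimum ranges over the admissible successors only. *)
Definition dp_step (t : seq nat) : seq nat :=
  let succ x0 x1 a b x2 := entry t x1 (if dom221 x1 (x0 + x2) then x2 else 2) a b in
  tabulate (fun x0 x1 a b =>
    x0 + minn (succ x0 x1 a b 0) (minn (succ x0 x1 a b 1) (succ x0 x1 a b 2))).

Definition dp (k : nat) : seq nat := iter k dp_step dp0.

Lemma size_dp k : size (dp k) = 81.
Proof. by case: k => [|k]; apply: size_tabulate. Qed.

Lemma dp_step_map_addn c t : size t = 81 ->
  dp_step (map (addn c) t) = map (addn c) (dp_step t).
Proof.
move=> size_t; rewrite /dp_step map_tabulate; apply: eq_tabulate => x0 x1 a b /=.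
have lt_code x2 : x2 <= 2 -> code x1 x2 a b < size t.
  by rewrite size_t /code; have := ltn_ord x1; have := ltn_ord a; have := ltn_ord b; lia.
rewrite !entry_map_addn ?lt_code //; try by case: ifP.
by rewrite -!addn_minr addnCA.
Qed.

Lemma dp_le_wsum k (s : seq 'I_3) : size s = k.+2 -> inner221 s ->
  entry (dp k) (nth ord0 s 0) (nth ord0 s 1) (nth ord0 s k) (nth ord0 s k.+1) <= wsum s.
Proof.
elim: k s => [|k IH] [|x0 [|x1 [|x2 t]]] // size_s.
  by move=> _; rewrite /entry nth_tabulate !eqxx /wsum /= addn0.
rewrite inner221_cons3 => /andP [x1_ok s221].
have size_t : size [:: x1, x2 & t] = k.+2 by case: size_s => /= ->.
have := IH _ size_t s221.
rewrite /= -/(dp k) /entry nth_tabulate /wsum /= leq_add2l.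
case: x2 x1_ok {s221 size_s size_t} => [[|[|[|//]]] ?] x1_ok; rewrite x1_ok => le_sum.
- exact: leq_trans (geq_minl _ _) le_sum.
- exact: leq_trans (leq_trans (geq_minr _ _) (geq_minl _ _)) le_sum.
- exact: leq_trans (leq_trans (geq_minr _ _) (geq_minr _ _)) le_sum.
Qed.

Definition wraps (x0 x1 a b : nat) : bool := dom221 x0 (b + x1) && dom221 b (a + x0).

Definition dp_bounded (k : nat) (t : seq nat) : bool :=
  all id (tabulate (fun x0 x1 a b =>
    wraps x0 x1 a b ==> (gamma221_formula k.+2 <= entry t x0 x1 a b))).

Lemma dp_bounded_small : all (fun k => dp_bounded k (dp k)) (iota 1 13).
Proof. by vm_compute. Qed.

Lemma dp_period : dp 14 = map (addn 6) (dp 7).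
Proof. by vm_compute. Qed.

Lemma dp_add7n q j : dp (j + 7 + 7 * q) = map (addn (6 * q)) (dp (j + 7)).
Proof.
have dp_add7 i : dp (i + 14) = map (addn 6) (dp (i + 7)).
  elim: i => [|i IH]; first exact: dp_period.
  by rewrite !addSn /= -/(dp (i + 14)) IH dp_step_map_addn ?size_dp.
elim: q => [|q IH]; first by rewrite muln0 addn0 map_id_in.
rewrite (_ : j + 7 + 7 * q.+1 = j + 7 * q + 14); last by lia.
rewrite dp_add7 (_ : j + 7 * q + 7 = j + 7 + 7 * q); last by lia.
by rewrite IH -map_comp; apply: eq_map => x /=; lia.
Qed.

Lemma dp_ge_formula_small k (x0 x1 a b : 'I_3) : 0 < k < 14 -> wraps x0 x1 a b ->
  gamma221_formula k.+2 <= entry (dp k) x0 x1 a b.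
Proof.
move=> k_range wr; have k_in : k \in iota 1 13 by rewrite mem_iota; lia.
have /allP/(_ k k_in)/allP/(_ _ (mem_tabulate _ x0 x1 a b)) := dp_bounded_small.
by rewrite wr.
Qed.

Lemma dp_ge_formula k (x0 x1 a b : 'I_3) : 0 < k -> wraps x0 x1 a b ->
  gamma221_formula k.+2 <= entry (dp k) x0 x1 a b.
Proof.
move=> k_gt0 wr; have [k_lt14|k_ge14] := ltnP k 14.
  by apply: dp_ge_formula_small; rewrite ?k_gt0.
have r_lt7 : (k - 7) %% 7 < 7 by rewrite ltn_mod.
have -> : k = (k - 7) %% 7 + 7 + 7 * ((k - 7) %/ 7).
  by have := divn_eq (k - 7) 7; lia.
move: r_lt7; set r := _ %% 7; set q := _ %/ 7 => r_lt7.
rewrite (_ : (r + 7 + 7 * q).+2 = (r + 7).+2 + 7 * q); last by lia.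
rewrite dp_add7n entry_map_addn ?size_dp ?code_lt // gamma221_formula_add7n.
by rewrite addnC leq_add2l dp_ge_formula_small //; lia.
Qed.

Lemma cycle_word_wsum_ge k (s : seq 'I_3) : size s = k.+3 -> inner221 s ->
  wraps (nth ord0 s 0) (nth ord0 s 1) (nth ord0 s k.+1) (nth ord0 s k.+2) ->
  gamma221_formula k.+3 <= wsum s.
Proof.
move=> size_s s221 wr; apply: leq_trans (dp_le_wsum size_s s221).
exact: dp_ge_formula.
Qed.

Lemma big_pred2 (T : finType) (F : T -> nat) (a b : T) : a != b ->
  \sum_(u | (u == a) || (u == b)) F u = F a + F b.
Proof.
move=> neq_ab; rewrite (bigD1 a) ?eqxx //= (big_pred1 b) // => u /=.
by case: (eqVneq u b) => [->|_]; rewrite ?orbT 1?eq_sym ?orbF ?andbN.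
Qed.

Lemma ordS_val n (i : 'I_n) : ordS i = (if i.+1 == n then 0 else i.+1) :> nat.
Proof.
rewrite /=; case: eqVneq => [->|ne]; rewrite ?modnn // modn_small //.
by rewrite ltn_neqAle ne ltn_ord.
Qed.

Lemma ordS_ord_pred_neq n (i : 'I_n) : 2 < n -> ordS i != ord_pred i.
Proof.
move=> n_gt2; rewrite -(inj_eq (can_inj (@ordSK n))) ord_predK.
apply/eqP => /(congr1 (@nat_of_ord n)); rewrite !ordS_val.
by have := ltn_ord i; repeat case: ifP => /eqP; lia.
Qed.

Lemma nbsum_cycle n (f : {ffun 'I_n -> 'I_3}) v : 2 < n ->
  nbsum (cycle_rel n) f v = f (ord_pred v) + f (ordS v).
Proof.
move=> n_gt2; rewrite /nbsum addnC -(big_pred2 (fun u => f u : nat)) ?ordS_ord_pred_neq //.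
apply: eq_bigl => u; congr orb.
apply/eqP/eqP => [eq_v | ->].
  have -> : v = ordS u by apply: ord_inj; exact: eq_v.
  by rewrite ordSK.
exact: esym (congr1 (@nat_of_ord n) (ord_predK v)).
Qed.

Section CycleWord.

Variables (k : nat) (f : {ffun 'I_k.+3 -> 'I_3}).
Hypothesis f221 : is_221_fun (cycle_rel k.+3) f.

Let w := fgraph f.

Lemma cycle_word_dom i : i < k.+3 ->
  let j := i.+1 %% k.+3 in
  dom221 (nth ord0 w j) (nth ord0 w i + nth ord0 w (j.+1 %% k.+3)).
Proof.
move=> lt_i; pose I := Ordinal lt_i.
move: f221; rewrite is_221_funE => /forallP /(_ (ordS I)).
by rewrite nbsum_cycle // ordSK -!(nth_fgraph_ord ord0).
Qed.

Lemma cycle_word_inner : inner221 w.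
Proof.
apply/inner221P => i; rewrite size_fgraph_ord => lt_i.
by have := cycle_word_dom (ltnW (ltnW lt_i)); rewrite /= !modn_small // ltnW.
Qed.

Lemma cycle_word_wraps :
  wraps (nth ord0 w 0) (nth ord0 w 1) (nth ord0 w k.+1) (nth ord0 w k.+2).
Proof.
apply/andP; split.
  by have := cycle_word_dom (ltnSn k.+2); rewrite /= (modnn k.+3) modn_small.
have := cycle_word_dom (ltnW (ltnSn k.+2)).
by rewrite /= (@modn_small k.+2) // (modnn k.+3).
Qed.

End CycleWord.

Lemma cycle_weight_ge n (f : {ffun 'I_n -> 'I_3}) : 2 < n ->
  is_221_fun (cycle_rel n) f -> gamma221_formula n <= weight f.
Proof.
case: n f => [|[|[|k]]] // f _ f221; rewrite weight_fgraph.
apply: cycle_word_wsum_ge; first exact: size_fgraph_ord.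
  exact: cycle_word_inner.
exact: cycle_word_wraps.
Qed.

Lemma sum_ord_nth n (s : seq 'I_3) i : size s = n ->
  \sum_(u < n | u == i :> nat) (nth ord0 s u : nat) = nth ord0 s i.
Proof.
move=> size_s; have [lt_in|le_ni] := ltnP i n; first exact: (big_pred1 (Ordinal lt_in)).
by rewrite nth_default ?size_s //; apply: big1 => u /eqP eq_ui; have := ltn_ord u; lia.
Qed.

Lemma nbsum_path n (f : {ffun 'I_n -> 'I_3}) (v : 'I_n) :
  nbsum (path_rel n) f v = nth ord0 (ord0 :: fgraph f) v + nth ord0 (fgraph f) v.+1.
Proof.
rewrite /nbsum (eq_bigr (fun u : 'I_n => nth ord0 (fgraph f) u : nat)); last first.
  by move=> u _; rewrite nth_fgraph_ord.
rewrite addnC (bigID (fun u : 'I_n => v.+1 == u :> nat)); congr addn.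
  rewrite (eq_bigl (fun u : 'I_n => u == v.+1 :> nat)) ?sum_ord_nth ?size_fgraph_ord //.
  move=> u.
  by rewrite /path_rel andb_idl eq_sym // => ->.
case: v => [[|m] lt_v].
  by rewrite big_pred0 // => u; rewrite /path_rel /= orbF andbN.
rewrite (eq_bigl (fun u : 'I_n => u == m :> nat)) ?sum_ord_nth ?size_fgraph_ord // => u.
by rewrite /path_rel eqSS; case: (eqVneq m.+2 u) => [<-|] /=; rewrite ?andbT //; lia.
Qed.

(* The missing neighbours of the two end vertices of the path count as 0. *)
Definition path221 (s : seq 'I_3) : bool := inner221 (ord0 :: rcons s ord0).

Lemma nth_path_pad (s : seq 'I_3) i :
  nth ord0 (ord0 :: rcons s ord0) i = nth ord0 (ord0 :: s) i.
Proof. by case: i => //= i; apply: nth_rcons_default. Qed.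

Lemma path221_is_221_fun n (f : {ffun 'I_n -> 'I_3}) :
  path221 (fgraph f) -> is_221_fun (path_rel n) f.
Proof.
move=> /inner221P w221; rewrite is_221_funE; apply/forallP => v.
have lt_v : v.+2 < size (ord0 :: rcons (fgraph f) ord0).
  by rewrite /= size_rcons size_fgraph_ord !ltnS.
by have := w221 v lt_v; rewrite !nth_path_pad nbsum_path -(nth_fgraph_ord ord0 v f).
Qed.

Lemma path221_cat s t : last ord0 s = ord0 -> head ord0 t = ord0 ->
  path221 s -> path221 t -> path221 (s ++ t).
Proof.
case/lastP: s => [|s x] //; rewrite last_rcons => ->.
case: t => [|y t] /=; first by rewrite cats0.
move=> -> s221 t221; rewrite /path221 rcons_cat cat_rcons -cat_cons.
apply: inner221_glue t221.
by move: s221; rewrite /path221 -!cats1 -catA.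
Qed.

Definition block : seq 'I_3 := map inZp [:: 0; 2; 1; 0; 1; 2; 0].

Definition short_path_words : seq (seq 'I_3) := map (map inZp)
  [:: [:: 0; 2; 1]; [:: 0; 2; 2; 0]; [:: 0; 2; 1; 2; 0]; [:: 0; 2; 1; 0; 1; 2];
      [:: 0; 2; 1; 0; 1; 2; 0]; [:: 0; 2; 1; 0; 1; 2; 2; 0];
      [:: 0; 2; 1; 0; 1; 2; 0; 1; 2]].

Definition path_word (n : nat) : seq 'I_3 :=
  flatten (nseq ((n - 3) %/ 7) block) ++ nth [::] short_path_words ((n - 3) %% 7).

Lemma block_spec :
  [&& size block == 7, wsum block == 6, path221 block,
      head ord0 block == ord0 & last ord0 block == ord0].
Proof. by vm_compute. Qed.

Lemma short_path_words_spec :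
  all (fun r => let s := nth [::] short_path_words r in
         [&& size s == r + 3, wsum s == gamma221_formula (r + 3),
             path221 s & head ord0 s == ord0])
      (iota 0 7).
Proof. by vm_compute. Qed.

Lemma blocks_spec q s : head ord0 s = ord0 -> path221 s ->
  [/\ size (flatten (nseq q block) ++ s) = 7 * q + size s,
      wsum (flatten (nseq q block) ++ s) = 6 * q + wsum s,
      path221 (flatten (nseq q block) ++ s)
    & head ord0 (flatten (nseq q block) ++ s) = ord0].
Proof.
move=> head_s s221.
case/and5P: block_spec => /eqP size_b /eqP wsum_b b221 /eqP head_b /eqP last_b.
elim: q => [|q [size_q wsum_q q221 head_q]]; first by rewrite !muln0.
have -> : flatten (nseq q.+1 block) ++ s = block ++ (flatten (nseq q block) ++ s).
  by rewrite catA.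
split; last exact: head_b.
- by rewrite size_cat size_q size_b mulnS addnA.
- by rewrite wsum_cat wsum_q wsum_b mulnS addnA.
- exact: path221_cat.
Qed.

Lemma path_word_spec n : 2 < n ->
  [/\ size (path_word n) = n, wsum (path_word n) = gamma221_formula n
    & path221 (path_word n)].
Proof.
move=> n_gt2; rewrite /path_word; set q := _ %/ 7; set r := _ %% 7.
have r_lt7 : r < 7 by rewrite ltn_mod.
have /allP/(_ r) := short_path_words_spec; rewrite mem_iota r_lt7 => /(_ isT).
case/and4P => /eqP size_s /eqP wsum_s s221 /eqP head_s.
have [-> -> b221 _] := blocks_spec q head_s s221.
have n_eq : n = r + 3 + 7 * q by have := divn_eq (n - 3) 7; lia.
by rewrite size_s wsum_s n_eq gamma221_formula_add7n; split => //; lia.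
Qed.

Lemma fgraph_of_word n (s : seq 'I_3) : size s = n ->
  exists f : {ffun 'I_n -> 'I_3}, fgraph f = s :> seq 'I_3.
Proof.
move=> size_s; exists [ffun i : 'I_n => nth ord0 s i].
apply: (@eq_from_nth _ ord0); first by rewrite size_fgraph_ord.
move=> i; rewrite size_fgraph_ord => lt_in.
by rewrite -[i]/(nat_of_ord (Ordinal lt_in)) nth_fgraph_ord ffunE.
Qed.

Lemma path_witness n : 2 < n ->
  exists2 f : {ffun 'I_n -> 'I_3},
    is_221_fun (path_rel n) f & weight f = gamma221_formula n.
Proof.
move=> n_gt2; have [size_w wsum_w w221] := path_word_spec n_gt2.
have [f fw] := fgraph_of_word size_w.
by exists f; [apply: path221_is_221_fun; rewrite fw | rewrite weight_fgraph fw].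
Qed.

Lemma path_rel_sub_cycle_rel n : subrel (path_rel n) (cycle_rel n).
Proof.
move=> i j /orP [] /eqP eq_ij; apply/orP; [left | right];
  by rewrite -eq_ij modn_small // eq_ij ltn_ord.
Qed.

Theorem proposition30 (n : nat) : 3 <= n ->
  let val := n - n %/ 7 + (if (n %% 7 == 1) || (n %% 7 == 2) then 1 else 0) in
  gamma221 (cycle_rel n) = val /\ gamma221 (path_rel n) = val.
Proof.
move=> n_ge3; change (gamma221 (cycle_rel n) = gamma221_formula n /\
                      gamma221 (path_rel n) = gamma221_formula n).
have [f f221 wf] := path_witness n_ge3.
have path_cycle := is_221_fun_subrel (@path_rel_sub_cycle_rel n).
have cycle_min g : is_221_fun (cycle_rel n) g -> weight f <= weight g.
  by rewrite wf; apply: cycle_weight_ge.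
rewrite -wf; split; apply: gamma221_witness.
- exact: path_cycle.
- exact: cycle_min.
- exact: f221.
- by move=> g /path_cycle; apply: cycle_min.
Qed.
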